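(* Let $b>0$ and let $h,k\in\mathbb{R}$ satisfy $k\geqslant 4bh-b^2$ and $k\geqslant 2b$. Along any solution of the equations of motion lying on the common level set $\{H=h,\ K=k\}\subset\mathcal{P}^4$ (with $r_3\neq0$), the separation variables $x(t),y(t)$ satisfy, for appropriate branches of the square roots, $$(x-y)\frac{dx}{dt}=-\frac{1}{\sqrt b}\sqrt{-W(x)},\qquad (x-y)\frac{dy}{dt}=\frac{1}{\sqrt b}\sqrt{-W(y)},$$ where $$W(s)=(s^2-k-2b)(s^2-k+2b)(s^2-2bs+4bh-k).$$ Equivalently, $\dfrac{dx}{\sqrt{-W(x)}}+\dfrac{dy}{\sqrt{-W(y)}}=0$ and $\dfrac{x\,dx}{\sqrt{-W(x)}}+\dfrac{y\,dy}{\sqrt{-W(y)}}=-\dfrac{dt}{\sqrt b}$.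
   Context: Goryachev's integrable case of rigid body dynamics (with the normalization $c=1$). On $\mathbb{R}^6$ with coordinates $\mathbf{s}=(s_1,s_2,s_3)$, $\mathbf{r}=(r_1,r_2,r_3)$, take the Poisson brackets $\{s_i,s_j\}=-\varepsilon_{ijk}s_k$, $\{s_i,r_j\}=-\varepsilon_{ijk}r_k$, $\{r_i,r_j\}=0$, and the Hamiltonian $$H=\tfrac12(s_1^2+s_2^2+2s_3^2)+\tfrac12\Big[(r_1^2-r_2^2)+\frac{b}{r_3^2}\Big],$$ $b$ a real parameter. The equations of motion are $\dot s_1=s_2s_3+r_2r_3-b\,r_2/r_3^3$, $\dot s_2=-s_1s_3+r_1r_3+b\,r_1/r_3^2$, $\dot s_3=-2r_1r_2$, $\dot r_1=2s_3r_2-s_2r_3$, $\dot r_2=-2s_3r_1+s_1r_3$, $\dot r_3=s_2r_1-s_1r_2$. The Casimir functions are $\Gamma=r_1^2+r_2^2+r_3^2$, $L=s_1r_1+s_2r_2+s_3r_3$, and $\mathcal{P}^4=\{(\mathbf{s},\mathbf{r}):\Gamma=1,\ L=0\}$. The additional first integral on $\mathcal{P}^4$ is $$K=\Big(s_1^2+s_2^2+\frac{b}{r_3^2}\Big)^2+2r_3^2(s_1^2-s_2^2)+r_3^4.$$ Separation variables: put $z=r_3^2$, $u=s_1^2+s_2^2+b/r_3^2$; then $x,y$ are the two roots of $s^2-\frac{2b}{z}s+\left(\frac{2bu}{z}-k\right)=0$, so that $z=\frac{2b}{x+y}$, $u=\frac{xy+k}{x+y}$. *)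

From Stdlib Require Import Reals.
Open Scope R_scope.

(* Hamiltonian H of Goryachev's case (c = 1). *)
Definition Ham (b s1 s2 s3 r1 r2 r3 : R) : R :=
  / 2 * (s1 ^ 2 + s2 ^ 2 + 2 * s3 ^ 2) + / 2 * ((r1 ^ 2 - r2 ^ 2) + b / r3 ^ 2).

Definition Kint (b s1 s2 r3 : R) : R :=
  (s1 ^ 2 + s2 ^ 2 + b / r3 ^ 2) ^ 2 + 2 * r3 ^ 2 * (s1 ^ 2 - s2 ^ 2) + r3 ^ 4.

Definition Gam (r1 r2 r3 : R) : R := r1 ^ 2 + r2 ^ 2 + r3 ^ 2.
Definition Lcas (s1 s2 s3 r1 r2 r3 : R) : R := s1 * r1 + s2 * r2 + s3 * r3.

Definition Wpoly (b h k s : R) : R :=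
  (s ^ 2 - k - 2 * b) * (s ^ 2 - k + 2 * b) * (s ^ 2 - 2 * b * s + 4 * b * h - k).

Definition is_solution (b a c : R) (s1 s2 s3 r1 r2 r3 : R -> R) : Prop :=
  forall t, a < t < c ->
    derivable_pt_lim s1 t (s2 t * s3 t + r2 t * r3 t - b * r2 t / r3 t ^ 3) /\
    derivable_pt_lim s2 t (- s1 t * s3 t + r1 t * r3 t + b * r1 t / r3 t ^ 3) /\
    derivable_pt_lim s3 t (- 2 * r1 t * r2 t) /\
    derivable_pt_lim r1 t (2 * s3 t * r2 t - s2 t * r3 t) /\
    derivable_pt_lim r2 t (- 2 * s3 t * r1 t + s1 t * r3 t) /\
    derivable_pt_lim r3 t (s2 t * r1 t - s1 t * r2 t).

From Stdlib Require Import Reals Lra.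
Open Scope R_scope.

(* Along the flow put z = r3^2, p = s1^2 + s2^2, u = p + b/z, and let
   m = s2 r1 - s1 r2 = dr3/dt, n = s1 r2 + s2 r1.  The equations of motion
   give du/dt = 2 r3 n, so differentiating the relations x + y = 2b/z and
   x y = 2bu/z - k defining the separation variables yields
     dx/dt + dy/dt = -4bm/r3^3,   d(xy)/dt = 4bn/r3 - 4bum/r3^3,
   hence (x - y) dx/dt = 4b/r3^3 (m v - z n) with v = u - x.
   On the other hand W(x) factors as -8b^3/z^3 (v^2 - z^2)(v(1-z) + z(u-2h)),
   and the Casimirs together with H = h, K = k turn this into the square of
   m v - z n, giving b ((x - y) dx/dt)^2 = -W(x).  By symmetry the same holds
   for y; extracting square roots gives the theorem. *)

Lemma derivative_of_invariant (f : R -> R) (a c C t l : R) :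
  a < t < c -> (forall s, a < s < c -> f s = C) ->
  derivable_pt_lim f t l -> l = 0.
Proof.
  intros Ht Hf Hd.
  apply (uniqueness_limite f t); [exact Hd |].
  apply (derivable_pt_lim_locally_ext (fun _ => C) f t a c 0 Ht).
  - intros s Hs; symmetry; exact (Hf s Hs).
  - apply derivable_pt_lim_const.
Qed.

(* Differentiates a polynomial expression in functions with known derivatives;
   subtraction is tried before addition because Rminus unfolds to Rplus. *)
Ltac derive :=
  repeat first
    [ apply derivable_pt_lim_mult | apply derivable_pt_lim_minus
    | apply derivable_pt_lim_plus | apply derivable_pt_lim_const
    | eassumption ].

Section Flow.

Variables (b k a c : R) (s1 s2 s3 r1 r2 r3 x y dx dy : R -> R).
Hypothesis hsol : is_solution b a c s1 s2 s3 r1 r2 r3.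
Hypothesis hr3 : forall t, a < t < c -> r3 t <> 0.
Hypothesis hxy : forall t, a < t < c ->
  let z := r3 t ^ 2 in
  let u := s1 t ^ 2 + s2 t ^ 2 + b / z in
  x t + y t = 2 * b / z /\ x t * y t = 2 * b * u / z - k.
Hypothesis hdx : forall t, a < t < c -> derivable_pt_lim x t (dx t).
Hypothesis hdy : forall t, a < t < c -> derivable_pt_lim y t (dy t).

(* Differentiating  r3^2 (x + y) = 2b. *)
Lemma sum_velocity (t : R) : a < t < c ->
  dx t + dy t = - 4 * b * (s2 t * r1 t - s1 t * r2 t) / r3 t ^ 3.
Proof.
  intros Ht.
  destruct (hsol t Ht) as (_ & _ & _ & _ & _ & dr3).
  pose proof (hdx t Ht) as ddx; pose proof (hdy t Ht) as ddy.
  pose proof (hr3 t Ht) as hr; destruct (hxy t Ht) as [hS _].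
  eassert (D : derivable_pt_lim (fun s => r3 s * r3 s * (x s + y s)) t ?[l])
    by derive.
  apply (derivative_of_invariant _ a c (2 * b)) in D; [| exact Ht |].
  2: { intros s Hs; destruct (hxy s Hs) as [hS' _]; rewrite hS'.
       field; exact (hr3 s Hs). }
  assert (hlin : r3 t * r3 t * (dx t + dy t)
                 = - 2 * r3 t * (s2 t * r1 t - s1 t * r2 t) * (x t + y t))
    by lra.
  replace (dx t + dy t) with (r3 t * r3 t * (dx t + dy t) / (r3 t * r3 t))
    by (field; exact hr).
  rewrite hlin, hS; field; exact hr.
Qed.

(* Differentiating  r3^2 (r3^2 (x y + k) - 2b p) = 2b^2, using du/dt = 2 r3 n. *)
Lemma product_velocity (t : R) : a < t < c ->
  dx t * y t + x t * dy t =
    4 * b * (s1 t * r2 t + s2 t * r1 t) / r3 t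
    - 4 * b * (s1 t ^ 2 + s2 t ^ 2 + b / r3 t ^ 2)
        * (s2 t * r1 t - s1 t * r2 t) / r3 t ^ 3.
Proof.
  intros Ht.
  destruct (hsol t Ht) as (ds1 & ds2 & _ & _ & _ & dr3).
  pose proof (hdx t Ht) as ddx; pose proof (hdy t Ht) as ddy.
  pose proof (hr3 t Ht) as hr; destruct (hxy t Ht) as [_ hP].
  eassert (D : derivable_pt_lim (fun s => r3 s * r3 s *
      (r3 s * r3 s * (x s * y s + k) - 2 * b * (s1 s * s1 s + s2 s * s2 s))) t ?[l])
    by derive.
  apply (derivative_of_invariant _ a c (2 * b * b)) in D; [| exact Ht |].
  2: { intros s Hs; destruct (hxy s Hs) as [_ hP']; rewrite hP'.
       field; exact (hr3 s Hs). }
  set (P := dx t * y t + x t * dy t).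
  assert (hlin : r3 t ^ 4 * P =
      - 4 * r3 t ^ 3 * (s2 t * r1 t - s1 t * r2 t) * (x t * y t + k)
      + 4 * b * r3 t * (s2 t * r1 t - s1 t * r2 t) * (s1 t ^ 2 + s2 t ^ 2)
      + 2 * b * r3 t ^ 2 *
          (2 * s1 t * (s2 t * s3 t + r2 t * r3 t - b * r2 t / r3 t ^ 3)
           + 2 * s2 t * (- s1 t * s3 t + r1 t * r3 t + b * r1 t / r3 t ^ 3)))
    by (unfold P; lra).
  replace P with (r3 t ^ 4 * P / r3 t ^ 4) by (field; exact hr).
  rewrite hlin, hP; field; exact hr.
Qed.

End Flow.

Lemma root_relation (b k x y z u : R) : z <> 0 ->
  x + y = 2 * b / z -> x * y = 2 * b * u / z - k ->
  x ^ 2 - k = - 2 * b * (u - x) / z.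
Proof.
  intros hz hS hP.
  replace (x ^ 2) with ((x + y) * x - x * y) by ring.
  rewrite hS, hP; field; exact hz.
Qed.

(* In the variable v = u - x, each factor of W(x) is (-2b/z) times a factor
   linear in v. *)
Lemma W_factorization (b h k x u z : R) : z <> 0 ->
  x ^ 2 - k = - 2 * b * (u - x) / z ->
  - Wpoly b h k x =
    8 * b ^ 3 / z ^ 3 * ((u - x) ^ 2 - z ^ 2) * ((u - x) * (1 - z) + z * (u - 2 * h)).
Proof.
  intros hz hroot; unfold Wpoly.
  replace (x ^ 2 - k - 2 * b) with ((x ^ 2 - k) - 2 * b) by ring.
  replace (x ^ 2 - k + 2 * b) with ((x ^ 2 - k) + 2 * b) by ring.
  replace (x ^ 2 - 2 * b * x + 4 * b * h - k)
    with ((x ^ 2 - k) - 2 * b * x + 4 * b * h) by ring.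
  rewrite hroot; field; exact hz.
Qed.

(* The central polynomial identity: with p = s1^2 + s2^2, q = s1^2 - s2^2,
   l = s1 r1 + s2 r2, m = s2 r1 - s1 r2, n = s1 r2 + s2 r1, on Gamma = 1
   (z = 1 - r1^2 - r2^2), the quadratic relation for v coming from K = k and
   the relation for u - 2h coming from H = h, L = 0 make
   2 (m v - z n)^2 = (v^2 - z^2)(v (1 - z) + z (u - 2h)). *)
Lemma velocity_square_identity (s1 s2 r1 r2 z v u h : R) :
  z = 1 - r1 ^ 2 - r2 ^ 2 ->
  v ^ 2 - 2 * (s1 ^ 2 + s2 ^ 2) * v - 2 * z * (s1 ^ 2 - s2 ^ 2) - z ^ 2 = 0 ->
  z * (u - 2 * h) = - 2 * (s1 * r1 + s2 * r2) ^ 2 - z * (r1 ^ 2 - r2 ^ 2) ->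
  2 * ((s2 * r1 - s1 * r2) * v - z * (s1 * r2 + s2 * r1)) ^ 2 =
    (v ^ 2 - z ^ 2) * (v * (1 - z) + z * (u - 2 * h)).
Proof.
  intros hz hquad hlin.
  replace (v ^ 2 - z ^ 2) with (2 * ((s1 ^ 2 + s2 ^ 2) * v + z * (s1 ^ 2 - s2 ^ 2)))
    by lra.
  replace (v * (1 - z) + z * (u - 2 * h))
    with (v * (1 - z) - 2 * (s1 * r1 + s2 * r2) ^ 2 - z * (r1 ^ 2 - r2 ^ 2))
    by lra.
  transitivity (2 * (((s2 * r1 - s1 * r2) * v - z * (s1 * r2 + s2 * r1)) ^ 2
      + (s1 * r1 + s2 * r2) ^ 2 *
        (v ^ 2 - 2 * (s1 ^ 2 + s2 ^ 2) * v - 2 * z * (s1 ^ 2 - s2 ^ 2) - z ^ 2))).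
  - rewrite hquad; ring.
  - rewrite hz; ring.
Qed.

Lemma root_velocity_squared (b h k s1 s2 s3 r1 r2 r3 x y dx dy : R) :
  r3 <> 0 ->
  Gam r1 r2 r3 = 1 -> Lcas s1 s2 s3 r1 r2 r3 = 0 ->
  Ham b s1 s2 s3 r1 r2 r3 = h -> Kint b s1 s2 r3 = k ->
  x + y = 2 * b / r3 ^ 2 ->
  x * y = 2 * b * (s1 ^ 2 + s2 ^ 2 + b / r3 ^ 2) / r3 ^ 2 - k ->
  dx + dy = - 4 * b * (s2 * r1 - s1 * r2) / r3 ^ 3 ->
  dx * y + x * dy = 4 * b * (s1 * r2 + s2 * r1) / r3
    - 4 * b * (s1 ^ 2 + s2 ^ 2 + b / r3 ^ 2) * (s2 * r1 - s1 * r2) / r3 ^ 3 ->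
  b * ((x - y) * dx) ^ 2 = - Wpoly b h k x.
Proof.
  unfold Gam, Lcas, Ham, Kint.
  intros hr hG hL hH hK hS hP hsum hprod.
  set (z := r3 ^ 2) in *; set (u := s1 ^ 2 + s2 ^ 2 + b / z) in *.
  assert (hz : z <> 0) by (apply pow_nonzero; exact hr).
  assert (hvel : (x - y) * dx = 4 * b / r3 ^ 3 *
      ((s2 * r1 - s1 * r2) * (u - x) - z * (s1 * r2 + s2 * r1))).
  { replace ((x - y) * dx) with (x * (dx + dy) - (dx * y + x * dy)) by ring.
    rewrite hsum, hprod; unfold z; field; exact hr. }
  pose proof (root_relation b k x y z u hz hS hP) as hroot.
  assert (hquad : (u - x) ^ 2 - 2 * (s1 ^ 2 + s2 ^ 2) * (u - x)
                  - 2 * z * (s1 ^ 2 - s2 ^ 2) - z ^ 2 = 0).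
  { transitivity (x ^ 2 - k + 2 * b * (u - x) / z).
    - rewrite <- hK; unfold u, z; field; exact hr.
    - rewrite hroot; field; exact hz. }
  assert (hs3 : s3 * r3 = - (s1 * r1 + s2 * r2)) by lra.
  assert (hlin : z * (u - 2 * h) =
                 - 2 * (s1 * r1 + s2 * r2) ^ 2 - z * (r1 ^ 2 - r2 ^ 2)).
  { rewrite <- hH; replace s3 with (s3 * r3 / r3) by (field; exact hr).
    rewrite hs3; unfold u, z; field; exact hr. }
  assert (hGz : z = 1 - r1 ^ 2 - r2 ^ 2) by lra.
  pose proof (velocity_square_identity s1 s2 r1 r2 z (u - x) u h hGz hquad hlin)
    as hsquare.
  rewrite (W_factorization b h k x u z hz hroot), hvel, Rmult_assoc, <- hsquare.
  unfold z; field; exact hr.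
Qed.

Lemma sqrt_branch (b G W : R) : 0 < b -> b * G ^ 2 = W ->
  0 <= W /\ exists e, (e = 1 \/ e = -1) /\ G = 1 / sqrt b * (e * sqrt W).
Proof.
  intros hb <-; split.
  { apply Rmult_le_pos; [lra | apply pow2_ge_0]. }
  assert (hsb : 0 < sqrt b) by (apply sqrt_lt_R0; exact hb).
  rewrite sqrt_mult_alt by lra.
  destruct (Rle_or_lt 0 G) as [hG | hG].
  - exists 1; split; [left; reflexivity |].
    rewrite sqrt_pow2 by exact hG; field; lra.
  - exists (-1); split; [right; reflexivity |].
    replace (G ^ 2) with ((- G) ^ 2) by ring.
    rewrite sqrt_pow2 by lra; field; lra.
Qed.

Theorem theorem2 (b h k : R) (hb : 0 < b)
  (hk1 : k >= 4 * b * h - b ^ 2) (hk2 : k >= 2 * b)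
  (a c : R) (s1 s2 s3 r1 r2 r3 x y dx dy : R -> R)
  (hsol : is_solution b a c s1 s2 s3 r1 r2 r3)
  (hr3 : forall t, a < t < c -> r3 t <> 0)
  (hG : forall t, a < t < c -> Gam (r1 t) (r2 t) (r3 t) = 1)
  (hL : forall t, a < t < c -> Lcas (s1 t) (s2 t) (s3 t) (r1 t) (r2 t) (r3 t) = 0)
  (hH : forall t, a < t < c -> Ham b (s1 t) (s2 t) (s3 t) (r1 t) (r2 t) (r3 t) = h)
  (hK : forall t, a < t < c -> Kint b (s1 t) (s2 t) (r3 t) = k)
  (* x t, y t are the two roots of s^2 - (2b/z) s + (2bu/z - k) = 0 *)
  (hxy : forall t, a < t < c ->
     let z := r3 t ^ 2 in
     let u := s1 t ^ 2 + s2 t ^ 2 + b / z in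
     x t + y t = 2 * b / z /\ x t * y t = 2 * b * u / z - k)
  (hdx : forall t, a < t < c -> derivable_pt_lim x t (dx t))
  (hdy : forall t, a < t < c -> derivable_pt_lim y t (dy t)) :
  forall t, a < t < c ->
    exists e1 e2 : R, (e1 = 1 \/ e1 = -1) /\ (e2 = 1 \/ e2 = -1) /\
      0 <= - Wpoly b h k (x t) /\ 0 <= - Wpoly b h k (y t) /\
      (x t - y t) * dx t = - (1 / sqrt b) * (e1 * sqrt (- Wpoly b h k (x t))) /\
      (x t - y t) * dy t = (1 / sqrt b) * (e2 * sqrt (- Wpoly b h k (y t))).
Proof.
  intros t Ht.
  destruct (hxy t Ht) as [hS hP].
  pose proof (sum_velocity b k a c s1 s2 s3 r1 r2 r3 x y dx dy
                hsol hr3 hxy hdx hdy t Ht) as hsum.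
  pose proof (product_velocity b k a c s1 s2 s3 r1 r2 r3 x y dx dy
                hsol hr3 hxy hdx hdy t Ht) as hprod.
  assert (hx : b * (- ((x t - y t) * dx t)) ^ 2 = - Wpoly b h k (x t)).
  { rewrite <- (root_velocity_squared b h k _ _ _ _ _ _ (x t) (y t) (dx t) (dy t)
      (hr3 t Ht) (hG t Ht) (hL t Ht) (hH t Ht) (hK t Ht) hS hP hsum hprod).
    ring. }
  assert (hy : b * ((x t - y t) * dy t) ^ 2 = - Wpoly b h k (y t)).
  { rewrite <- (root_velocity_squared b h k _ _ _ _ _ _ (y t) (x t) (dy t) (dx t)
      (hr3 t Ht) (hG t Ht) (hL t Ht) (hH t Ht) (hK t Ht));
      [ring | rewrite <- hS | rewrite <- hP | rewrite <- hsum | rewrite <- hprod];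
      ring. }
  destruct (sqrt_branch _ _ _ hb hx) as [hWx [e1 [he1 hex]]].
  destruct (sqrt_branch _ _ _ hb hy) as [hWy [e2 [he2 hey]]].
  exists e1, e2; repeat split; auto.
  lra.
Qed.
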